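(* Braided crossed modules of Lie algebras are equivalently given by: vector spaces $L_1,L_0$, a linear map $\partial:L_1\to L_0$ and a bilinear map $\{-,-\}:L_0\times L_0\to L_1$ satisfying, for all $a\in L_1$ and $x,u,v,w\in L_0$, (A) $\{\partial a,x\}+\{x,\partial a\}=0$; (B) $\partial\{x,x\}=0$; (C) $\{u,\partial\{v,w\}\}+\{w,\partial\{u,v\}\}+\{v,\partial\{w,u\}\}=0$. Precisely: a braided crossed module satisfies (A),(B),(C), and conversely such data become a braided crossed module of Lie algebras when one defines $[x,y]:=\partial\{x,y\}$ on $L_0$ and $[a,b]:=\{\partial a,\partial b\}$ on $L_1$; these constructions are mutually inverse.
   Context: All vector spaces over a field $k$ of characteristic $\neq2$. A braided crossed module of Lie algebras is a Lie algebra homomorphism $\partial:L_1\to L_0$ with a bilinear map $\{-,-\}:L_0\times L_0\to L_1$ such that for all $x,y,z\in L_0$, $a,b\in L_1$: $\partial\{x,y\}=[x,y]$; $\{\partial a,\partial b\}=[a,b]$; $\{\partial a,x\}+\{x,\partial a\}=0$; $\{x,[y,z]\}+\{z,[x,y]\}+\{y,[z,x]\}=0$. *)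

From HB Require Import structures.
From mathcomp Require Import all_boot all_order all_algebra.
Set Implicit Arguments. Unset Strict Implicit. Unset Printing Implicit Defensive.
Import GRing.Theory.
Local Open Scope ring_scope.

Definition is_linear_map (K : fieldType) (U V : lmodType K) (f : U -> V) : Prop :=
  forall (c : K) (x y : U), f (c *: x + y) = c *: f x + f y.

Definition is_bilinear_map (K : fieldType) (U V W : lmodType K)
  (f : U -> V -> W) : Prop :=
  (forall (c : K) (x y : U) (z : V), f (c *: x + y) z = c *: f x z + f y z) /\
  (forall (c : K) (x : U) (y z : V), f x (c *: y + z) = c *: f x y + f x z).

Definition is_lie_bracket (K : fieldType) (L : lmodType K) (br : L -> L -> L)
  : Prop :=
  is_bilinear_map br /\
  (forall x, br x x = 0) /\
  (forall x y z, br x (br y z) + br y (br z x) + br z (br x y) = 0).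

Definition is_braided_crossed_module (K : fieldType) (L1 L0 : lmodType K)
  (br1 : L1 -> L1 -> L1) (br0 : L0 -> L0 -> L0)
  (d : L1 -> L0) (h : L0 -> L0 -> L1) : Prop :=
  [/\ is_lie_bracket br1, is_lie_bracket br0,
      is_linear_map d /\ (forall a b, d (br1 a b) = br0 (d a) (d b)),
      is_bilinear_map h &
      [/\ forall x y, d (h x y) = br0 x y,
          forall a b, h (d a) (d b) = br1 a b,
          forall a x, h (d a) x + h x (d a) = 0 &
          forall x y z, h x (br0 y z) + h z (br0 x y) + h y (br0 z x) = 0]].

Definition is_ABC_data (K : fieldType) (L1 L0 : lmodType K)
  (d : L1 -> L0) (h : L0 -> L0 -> L1) : Prop :=
  [/\ is_linear_map d, is_bilinear_map h,
      forall a x, h (d a) x + h x (d a) = 0,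
      forall x, d (h x x) = 0 &
      forall u v w,
        h u (d (h v w)) + h w (d (h u v)) + h v (d (h w u)) = 0].

From HB Require Import structures.
From mathcomp Require Import all_boot all_order all_algebra.
From Stdlib Require Import FunctionalExtensionality.
Set Implicit Arguments.
Unset Strict Implicit.
Unset Printing Implicit Defensive.
Import GRing.Theory.
Local Open Scope ring_scope.

(* Forward direction: in a braided crossed module the axioms
   d {x,y} = [x,y] and {d a, d b} = [a,b] force both brackets to be the
   composites d o {-,-} and {-,-} o (d x d); substituting them turns the
   alternating law of L0 into (B) and the last braiding axiom into (C),
   while (A) is itself a braiding axiom.

   Converse: for ABC data, d o {-,-} is a Lie bracket on L0 (alternating by
   (B), Jacobi = d applied to (C)), and {-,-} o (d x d) is a Lie bracket on
   L1 (alternating because (A) at x = d a gives 2 {d a, d a} = 0, and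
   char K <> 2; Jacobi = (C) at d a, d b, d c). *)

Section LinearFacts.
Variable K : fieldType.

Lemma linear_map_add (U V : lmodType K) (f : U -> V) :
  is_linear_map f -> forall x y, f (x + y) = f x + f y.
Proof. by move=> f_lin x y; rewrite -[x in LHS]scale1r f_lin scale1r. Qed.

Lemma linear_map0 (U V : lmodType K) (f : U -> V) :
  is_linear_map f -> f 0 = 0.
Proof.
move=> f_lin; apply: (addrI (f 0)).
by rewrite -linear_map_add // !addr0.
Qed.

Lemma bilinear_postcomp (U V W X : lmodType K) (f : W -> X) (h : U -> V -> W) :
  is_linear_map f -> is_bilinear_map h ->
  is_bilinear_map (fun x y => f (h x y)).
Proof.
move=> f_lin [h_linl h_linr]; split=> c x y z.
- by rewrite h_linl f_lin.
- by rewrite h_linr f_lin.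
Qed.

Lemma bilinear_precomp (U V W : lmodType K) (g : U -> V) (h : V -> V -> W) :
  is_linear_map g -> is_bilinear_map h ->
  is_bilinear_map (fun a b => h (g a) (g b)).
Proof.
move=> g_lin [h_linl h_linr]; split=> c x y z.
- by rewrite g_lin h_linl.
- by rewrite g_lin h_linr.
Qed.

Lemma double_eq0 (V : lmodType K) (v : V) :
  (2%:R : K) != 0 -> v + v = 0 -> v = 0.
Proof.
move=> two_neq0 vv0; have /eqP : (2%:R : K) *: v = 0.
  by rewrite scaler_nat mulr2n.
by rewrite scaler_eq0 (negbTE two_neq0) => /eqP.
Qed.

End LinearFacts.

Section FromBraidedCrossedModule.
Variables (K : fieldType) (L1 L0 : lmodType K).
Variables (br1 : L1 -> L1 -> L1) (br0 : L0 -> L0 -> L0).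
Variables (d : L1 -> L0) (h : L0 -> L0 -> L1).
Hypothesis bcm : is_braided_crossed_module br1 br0 d h.

Lemma bcm_br0E : br0 = (fun x y => d (h x y)).
Proof.
case: bcm => _ _ _ _ [dh _ _ _].
by apply: functional_extensionality => x;
   apply: functional_extensionality => y; rewrite dh.
Qed.

Lemma bcm_br1E : br1 = (fun a b => h (d a) (d b)).
Proof.
case: bcm => _ _ _ _ [_ hd _ _].
by apply: functional_extensionality => a;
   apply: functional_extensionality => b; rewrite hd.
Qed.

Lemma bcm_ABC : is_ABC_data d h.
Proof.
case: bcm => _ [_ [alt0 _]] [d_lin _] h_bilin [dh _ HA Hbraid].
split=> // [x | u v w]; first by rewrite dh alt0.
by rewrite !dh.
Qed.

End FromBraidedCrossedModule.

Section FromABCData.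
Variables (K : fieldType) (L1 L0 : lmodType K).
Hypothesis two_neq0 : (2%:R : K) != 0.
Variables (d : L1 -> L0) (h : L0 -> L0 -> L1).
Hypothesis abc : is_ABC_data d h.

(* [x,y] := d {x,y} is a Lie bracket on L0: (B) and d applied to (C). *)
Lemma ABC_lie0 : is_lie_bracket (fun x y => d (h x y)).
Proof.
case: abc => d_lin h_bilin _ HB HC.
split; [exact: bilinear_postcomp | split=> // x y z].
rewrite -!linear_map_add // -(linear_map0 d_lin); congr d.
by rewrite -(HC x y z) addrAC.
Qed.

(* [a,b] := {d a, d b} is a Lie bracket on L1: (A) at x = d a and
   char K <> 2 give alternation, (C) at d a, d b, d c gives Jacobi. *)
Lemma ABC_lie1 : is_lie_bracket (fun a b => h (d a) (d b)).
Proof.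
case: abc => d_lin h_bilin HA _ HC.
split; [exact: bilinear_precomp | split=> [a | a b c]].
- exact: double_eq0 (HA a (d a)).
- by rewrite -(HC (d a) (d b) (d c)) addrAC.
Qed.

Lemma ABC_bcm :
  is_braided_crossed_module (fun a b => h (d a) (d b))
                            (fun x y => d (h x y)) d h.
Proof.
case: abc => d_lin h_bilin HA _ HC.
split; [exact: ABC_lie1 | exact: ABC_lie0 | by [] | by [] | by []].
Qed.

End FromABCData.

Theorem proposition4p2 (K : fieldType) (L1 L0 : lmodType K)
  (char_not_2 : (2%:R : K) != 0) :
  (forall (br1 : L1 -> L1 -> L1) (br0 : L0 -> L0 -> L0)
          (d : L1 -> L0) (h : L0 -> L0 -> L1),
     is_braided_crossed_module br1 br0 d h ->
     [/\ is_ABC_data d h,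
         br0 = (fun x y => d (h x y)) &
         br1 = (fun a b => h (d a) (d b))]) /\
  (forall (d : L1 -> L0) (h : L0 -> L0 -> L1),
     is_ABC_data d h ->
     is_braided_crossed_module (fun a b => h (d a) (d b))
                               (fun x y => d (h x y)) d h).
Proof.
split=> [br1 br0 d h bcm | d h abc].
- by split; [exact: bcm_ABC bcm | exact: bcm_br0E bcm | exact: bcm_br1E bcm].
- exact: (ABC_bcm char_not_2 abc).
Qed.
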